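(* Let $n,d,c\in\mathbb{N}$ with $d\ge 50$ and $1\le c\le d$, and let $\mathcal{F}\subseteq 2^{[n]}$ be a hereditary family with $\delta(\mathcal{F})\ge 2^{d-1}-c+1$. If $P\subseteq[n]$ is an isolated pile of $\mathcal{F}$, then $\sum_{x\in P}\omega_{\mathcal{F}}(x)\ge \mathfrak{B}_c\, d$.
   Context: A family $\mathcal{F}\subseteq 2^{[n]}$ is hereditary if $F'\subseteq F\in\mathcal{F}$ implies $F'\in\mathcal{F}$. $d_{\mathcal{F}}(x)=|\{F\in\mathcal{F}:x\in F\}|$, $\delta(\mathcal{F})=\min_x d_{\mathcal{F}}(x)$, $N(x)=\bigcup_{x\in F\in\mathcal{F}}F$. The weight of $x$ is $\omega_{\mathcal{F}}(x)=\sum_{x\in F\in\mathcal{F}}\frac{1}{|F|}$. For $1\le c\le d$, $\mathfrak{B}_c=\frac{2^d-c}{d}$ if $1\le c\le d-1$ and $\mathfrak{B}_d=\frac{2^d-d-\frac12}{d}$. A set $P\subseteq[n]$ with $|P|=d$ is a pile of $\mathcal{F}$ if $P\subseteq N(y)$ for every $y\in P$, and there exists $z\in P$ with $N(z)=P$. A pile is isolated if it is disjoint from every other pile of $\mathcal{F}$. *)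

From mathcomp Require Import all_boot all_order all_algebra.
Set Implicit Arguments. Unset Strict Implicit. Unset Printing Implicit Defensive.
Import Order.TTheory GRing.Theory Num.Theory.

Definition hereditary n (F : {set {set 'I_n}}) : Prop :=
  forall A B : {set 'I_n}, B \in F -> A \subset B -> A \in F.

Definition degF n (F : {set {set 'I_n}}) (x : 'I_n) : nat :=
  #|[set A in F | x \in A]|.

Definition nbhd n (F : {set {set 'I_n}}) (x : 'I_n) : {set 'I_n} :=
  \bigcup_(A in F | x \in A) A.

Definition weight n (F : {set {set 'I_n}}) (x : 'I_n) : rat :=
  (\sum_(A in F | x \in A) (#|A|%:R)^-1)%R.

Definition frakB (d c : nat) : rat :=
  (if (c < d)%N then ((2 ^ d)%:R - c%:R) / d%:R
   else ((2 ^ d)%:R - d%:R - 2^-1) / d%:R)%R.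

Definition is_pile n (F : {set {set 'I_n}}) (d : nat) (P : {set 'I_n}) : Prop :=
  #|P| = d /\ (forall y, y \in P -> P \subset nbhd F y) /\
  exists2 z, z \in P & nbhd F z = P.

Definition isolated_pile n (F : {set {set 'I_n}}) (d : nat) (P : {set 'I_n}) : Prop :=
  is_pile F d P /\
  forall Q, is_pile F d Q -> Q != P -> [disjoint Q & P].

From mathcomp Require Import all_boot all_order all_algebra.
From mathcomp Require Import zify lra.
Set Implicit Arguments. Unset Strict Implicit. Unset Printing Implicit Defensive.
Import Order.TTheory GRing.Theory Num.Theory.

(* Let z be the vertex with N(z) = P and let U be the family of subsets of P that
   are missing from F; U is an up-set inside P because F is hereditary. Counting
   the members of F inside P, the total weight of P is 2^d - 1 - |U| plus the
   "outer weight" that the vertices of P receive from members of F not inside P.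
   The degree condition at y ∈ P forces at least t - a(y) outer sets through y,
   where t = |U| + 1 - c is the deficit and a(y) counts the members of U avoiding
   y; at z, which has no outer sets, it gives t <= a(z) <= |U| - a(z) < c. So it
   suffices to show that the outer weight is at least t (t - 1/2 when c = d).
   A vertex with m outer sets has outer weight at least min(m, 2^(K-2))/K:
   either its outer sets all have size at most K, or one of them contains
   2^(K-2) outer sets of size at most K. The up-closure of U, which contains
   P and the sets P - y for every avoided y, shows that only few vertices are
   avoided often; with K about log2 d this yields the bound. *)

Lemma card_sepID (T : finType) (X : {set T}) (p : pred T) :
  #|[set x in X | p x]| + #|[set x in X | ~~ p x]| = #|X|.
Proof.
rewrite -(cardsID [set x | p x] X).
by congr (_ + _); apply: eq_card => x; rewrite !inE // andbC.
Qed.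

Lemma leq_card_in_set (T T' : finType) (f : T -> T') (D : {set T}) (E : {set T'}) :
  {in D &, injective f} -> {in D, forall x, f x \in E} -> #|D| <= #|E|.
Proof.
move=> f_inj fDE; rewrite -(card_in_imset f_inj); apply: subset_leq_card.
by apply/subsetP => _ /imsetP [x xD ->]; apply: fDE.
Qed.

Lemma leq_card_bigcup (I T : finType) (D : {set I}) (G : I -> {set T}) :
  #|\bigcup_(i in D) G i| <= \sum_(i in D) #|G i|.
Proof.
elim/big_rec2: _ => [|i A m _ IH]; first by rewrite cards0.
by apply: leq_trans (leq_card_setU _ _) _; rewrite leq_add2l.
Qed.

Lemma exists_subset_card (T : finType) (A : {set T}) k :
  k <= #|A| -> exists2 B : {set T}, B \subset A & #|B| = k.
Proof.
move=> /card_geqP [s [s_uniq s_size sA]].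
exists [set x in s]; first by apply/subsetP => x; rewrite inE; apply: sA.
by rewrite cardsE (card_uniqP s_uniq).
Qed.

Lemma setDDK (T : finType) (P A : {set T}) : A \subset P -> P :\: (P :\: A) = A.
Proof. by rewrite setDDr setDv set0U => /setIidPr. Qed.

Lemma ler_card_mul_sum (R : numDomainType) (I : finType) (D : {set I}) (f : I -> R) b :
  {in D, forall i, b <= f i}%R -> (#|D|%:R * b <= \sum_(i in D) f i)%R.
Proof.
move=> le_bf; rewrite -sum1_card natr_sum mulr_suml.
by apply: ler_sum => i iD; rewrite mul1r le_bf.
Qed.

Lemma ler_sum_subset (R : numDomainType) (I : finType) (A B : {set I}) (f : I -> R) :
  A \subset B -> {in B, forall i, 0 <= f i}%R ->
  (\sum_(i in A) f i <= \sum_(i in B) f i)%R.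
Proof.
move=> AB f_ge0; rewrite [leRHS](big_setID A) /= (setIidPr AB) lerDl.
by apply: sumr_ge0 => i; rewrite inE => /andP[_ /f_ge0].
Qed.

Lemma ler_nat_ratio (R : numFieldType) (q m K b : nat) :
  0 < K -> K * b <= q * m -> (b%:R <= q%:R * m%:R / K%:R :> R)%R.
Proof.
by move=> K_gt0 le_bqm; rewrite ler_pdivlMr ?ltr0n // -!natrM ler_nat mulnC.
Qed.

Lemma ler_natB (R : numDomainType) m n : (m%:R - n%:R <= (m - n)%:R :> R)%R.
Proof.
have [n_le_m | m_lt_n] := leqP n m; first by rewrite natrB.
by rewrite (_ : m - n = 0) ?subr_le0 ?ler_nat ?(ltnW m_lt_n) //; lia.
Qed.

Lemma exists_log_scale d : 50 <= d ->
  exists K, [/\ 3 <= K, d <= 2 ^ (K - 2) & 4 * K <= d + 3].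
Proof.
move=> d_ge50; exists (trunc_log 2 d + 3).
have d_lt := trunc_log_ltn d (isT : 1 < 2).
have d_ge := trunc_logP (isT : 1 < 2) (leq_trans (isT : 0 < 50) d_ge50).
move: (trunc_log 2 d) d_lt d_ge => k d_lt d_ge.
have -> : k + 3 - 2 = k.+1 by lia.
split; [lia | exact: ltnW |].
have [k_le10 | k_gt10] := leqP k 10; first lia.
suff : 4 * k + 9 <= 2 ^ k by lia.
elim: k k_gt10 {d_lt d_ge} => // k IH; rewrite ltnS leq_eqVlt => /orP[/eqP <- // | /IH].
by rewrite expnS; have := ltn_expl k (isT : 1 < 2); lia.
Qed.

(** * Up-sets inside a ground set *)

Definition sets_with (T : finType) (U : {set {set T}}) (x : T) := [set S in U | x \in S].
Definition sets_without (T : finType) (U : {set {set T}}) (x : T) :=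
  [set S in U | x \notin S].
Definition avoid_num (T : finType) (U : {set {set T}}) (x : T) := #|sets_without U x|.

Definition codim2 (T : finType) (P : {set T}) (U : {set {set T}}) z :=
  [set S in sets_with U z | #|P :\: S| == 2].
Definition rarely_avoided (T : finType) (P : {set T}) (U : {set {set T}}) z k :=
  [set y in P :\ z | avoid_num U y <= k].
Definition often_avoided (T : finType) (P : {set T}) (U : {set {set T}}) z k :=
  [set y in P :\ z | k < avoid_num U y].

Section Families.

Variables (T : finType) (P : {set T}) (U : {set {set T}}).

Lemma card_with_add_avoid_num x : #|sets_with U x| + avoid_num U x = #|U|.
Proof. exact: card_sepID. Qed.

Lemma avoid_num_split z y :
  avoid_num U y = avoid_num (sets_with U z) y + avoid_num (sets_without U z) y.
Proof.
rewrite /avoid_num -(card_sepID (sets_without U y) (fun S => z \in S)).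
by congr (_ + _); apply: eq_card => S; rewrite !inE;
  case: (S \in U); case: (y \in S); case: (z \in S).
Qed.

Lemma avoid_num_le_card_with x :
  {in U, forall S, x |: S \in U} -> avoid_num U x <= #|sets_with U x|.
Proof.
move=> U_stable; apply: (@leq_card_in_set _ _ (fun S => x |: S)).
  move=> S1 S2; rewrite !inE => /andP[_ xS1] /andP[_ xS2] eqS.
  by rewrite -(setU1K xS1) eqS setU1K.
by move=> S; rewrite !inE => /andP[/U_stable -> _]; rewrite eqxx.
Qed.

Lemma card_rarely_add_often_avoided z k : z \in P ->
  #|rarely_avoided P U z k| + #|often_avoided P U z k| + 1 = #|P|.
Proof.
move=> zP; rewrite (cardsD1 z P) zP addn1 add1n; congr _.+1.
rewrite -(card_sepID (P :\ z) (fun y => avoid_num U y <= k)).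
by congr (_ + _); apply: eq_card => y; rewrite !inE -ltnNge.
Qed.

Lemma card_rarely_avoided_mono z k k' : k <= k' ->
  #|rarely_avoided P U z k| <= #|rarely_avoided P U z k'|.
Proof.
move=> le_kk'; apply/subset_leq_card/subsetP => y; rewrite !inE.
by case/andP=> -> /leq_trans->.
Qed.

End Families.

Section UpSet.

Variables (T : finType) (P : {set T}) (U : {set {set T}}).
Hypothesis U_sub : forall S, S \in U -> S \subset P.
Hypothesis U_up :
  forall S S' : {set T}, S \in U -> S \subset S' -> S' \subset P -> S' \in U.

Lemma setU1_up x S : x \in P -> S \in U -> x |: S \in U.
Proof.
move=> xP SU; have S_sub := U_sub SU.
by apply: U_up SU (subsetUr _ _) _; rewrite subUset sub1set xP.
Qed.

Lemma setD1_up y : 0 < avoid_num U y -> P :\ y \in U.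
Proof.
move=> /card_gt0P [S]; rewrite inE => /andP[SU yS]; have S_sub := U_sub SU.
by apply: U_up SU _ (subD1set _ _); rewrite subsetD1 S_sub.
Qed.

Lemma avoid_num_le_card_with_up z : z \in P -> avoid_num U z <= #|sets_with U z|.
Proof. by move=> zP; apply: avoid_num_le_card_with => S; apply: setU1_up. Qed.

Lemma avoid_num_without_le z y : z \in P -> y != z ->
  avoid_num (sets_without U z) y <= avoid_num (sets_with U z) y.
Proof.
move=> zP yz.
have stable : {in sets_without U y, forall S, z |: S \in sets_without U y}.
  move=> S; rewrite !inE => /andP[SU yS].
  by rewrite setU1_up // negb_or yS andbT.
have := avoid_num_le_card_with stable.
by rewrite /avoid_num; congr (_ <= _); apply: eq_card => S; rewrite !inE;
  case: (S \in U); case: (y \in S); case: (z \in S).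
Qed.

Lemma card_often_avoided1_le z : z \in P ->
  #|often_avoided P U z 1| <=
  #|often_avoided P (sets_with U z) z 1| + #|often_avoided P (sets_without U z) z 0|.
Proof.
move=> zP; apply: leq_trans (leq_card_setU _ _); apply/subset_leq_card/subsetP => y.
rewrite !inE => /andP[/andP[yz yP] a_gt1]; rewrite yz yP /=.
have a0_le := avoid_num_without_le zP yz; rewrite (avoid_num_split U z y) in a_gt1.
by case: ltnP => //= az_le1; lia.
Qed.

Lemma rarely_avoided_with_sub z k : z \in P ->
  rarely_avoided P (sets_with U z) z k \subset rarely_avoided P U z (2 * k).
Proof.
move=> zP; apply/subsetP => y; rewrite !inE => /andP[/andP[yz yP] az_le].
rewrite yz yP (avoid_num_split U z y) /=; have := avoid_num_without_le zP yz; lia.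
Qed.

Lemma card_often_avoided_add_codim2_lt z : P \in U -> z \in P ->
  #|often_avoided P U z 0| + #|codim2 P U z| < #|sets_with U z|.
Proof.
(* P, the sets P :\ y for avoided y, and the members of codimension 2 are
   distinct members of U containing z. *)
move=> PU zP; set X := often_avoided P U z 0; set W := sets_with U z.
have codim_setD1 y : y \in P -> #|P :\: (P :\ y)| = 1.
  by move=> yP; rewrite setDDK ?cards1 ?sub1set.
have low_ge : 1 + #|X| <= #|[set S in W | #|P :\: S| <= 1]|.
  have <- : #|P |: [set P :\ y | y in X]| = 1 + #|X|.
    have P_new : P \notin [set P :\ y | y in X].
      apply/imsetP => -[y]; rewrite !inE => /andP[/andP[_ yP] _].
      by move/setP/(_ y); rewrite !inE eqxx yP.
    rewrite cardsU1 P_new card_in_imset // => y1 y2.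
    rewrite !inE => /andP[/andP[_ y1P] _] /andP[/andP[_ y2P] _] eqP.
    by apply: set1_inj; rewrite -(@setDDK _ P [set y1]) ?sub1set // eqP setDDK ?sub1set.
  apply: subset_leq_card; rewrite subUset sub1set !inE PU zP setDv cards0 /=.
  apply/subsetP => _ /imsetP[y + ->]; rewrite !inE => /andP[/andP[yz yP] ay].
  by rewrite setD1_up // codim_setD1 // eq_sym yz zP.
have high_ge : #|codim2 P U z| <= #|[set S in W | ~~ (#|P :\: S| <= 1)]|.
  apply/subset_leq_card/subsetP => S; rewrite !inE.
  by case/andP=> -> /eqP ->.
have := card_sepID W (fun S => #|P :\: S| <= 1); lia.
Qed.

Lemma codim2_of_proper z y S : y \in P -> S \in sets_with U z -> S \proper P :\ y ->
  exists2 S', S' \in codim2 P U z & y \in P :\: S'.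
Proof.
move=> yP; rewrite inE => /andP[SU zS] /properP[S_sub [q]].
rewrite !inE => /andP[qy qP] qS.
have yq_sub : [set y; q] \subset P by rewrite subUset !sub1set yP qP.
exists (P :\: [set y; q]); last by rewrite setDDK // !inE eqxx.
have S_sub' : S \subset P :\: [set y; q].
  apply/subsetP => x xS; have := subsetP S_sub x xS; rewrite !inE => /andP[xy ->].
  by rewrite andbT negb_or xy; apply: contraNneq qS => <-.
rewrite !inE setDDK // cards2 (eq_sym y) qy (U_up SU S_sub' (subsetDl _ _)) andbT.
by have := subsetP S_sub' z zS; rewrite !inE.
Qed.

Lemma card_often_avoided_with_le z : z \in P ->
  #|often_avoided P (sets_with U z) z 1| <= 2 * #|codim2 P U z|.
Proof.
(* Each such y misses some member of codimension 2, which misses only two points. *)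
move=> zP.
have covered : often_avoided P (sets_with U z) z 1 \subset
    \bigcup_(S in codim2 P U z) (P :\: S).
  apply/subsetP => y; rewrite !inE => /andP[/andP[_ yP]].
  move=> /card_gt1P[S1 [S2 [S1y S2y S12]]].
  have [S SW SPy] : exists2 S, S \in sets_without (sets_with U z) y & S != P :\ y.
    case: (eqVneq S1 (P :\ y)) => [S1e | ]; last by exists S1.
    by exists S2; rewrite // -S1e eq_sym.
  move: SW; rewrite [S \in sets_without _ _]inE => /andP[SW yS].
  have S_proper : S \proper P :\ y.
    move: SW; rewrite inE => /andP[SU _].
    by rewrite properEneq SPy subsetD1 U_sub.
  have [S' S'c yS'] := codim2_of_proper yP SW S_proper.
  by apply/bigcupP; exists S'.
apply: leq_trans (subset_leq_card covered) _.
apply: leq_trans (leq_card_bigcup _ _) _.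
rewrite mulnC -sum_nat_const; apply: leq_sum => S.
by rewrite inE => /andP[_ /eqP ->].
Qed.

Lemma card_often_avoided_without_lt z : z \in P ->
  0 < #|often_avoided P (sets_without U z) z 0| ->
  #|often_avoided P (sets_without U z) z 0| < avoid_num U z.
Proof.
(* y |-> P :\: [set z; y] maps into the members avoiding z other than P :\ z. *)
move=> zP; set Y := often_avoided P _ z 0.
have pair_up y : y \in Y -> P :\: [set z; y] \in sets_without U z.
  rewrite !inE => /andP[_ /card_gt0P[S]]; rewrite !inE => /andP[/andP[SU zS] yS].
  have S_sub : S \subset P :\: [set z; y].
    apply/subsetP => x xS; rewrite !inE (subsetP (U_sub SU) x xS) andbT.
    by apply/negP => /orP[] /eqP xe; [move: zS | move: yS]; rewrite -xe xS.
  by rewrite eqxx /= andbT; apply: U_up SU S_sub (subsetDl _ _).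
move=> /card_gt0P[y0 y0Y].
have Pz_in : P :\ z \in sets_without U z.
  rewrite inE setD1_up ?inE ?eqxx //.
  by apply/card_gt0P; exists (P :\: [set z; y0]); apply: pair_up.
rewrite /avoid_num (cardsD1 (P :\ z)) Pz_in add1n ltnS.
apply: (@leq_card_in_set _ _ (fun y => P :\: [set z; y])) => [y1 y2 y1Y y2Y eqD | y yY].
  move: y1Y; rewrite !inE => /andP[/andP[y1z y1P] _].
  move: eqD => /setP/(_ y1); rewrite !inE eqxx y1P (negPf y1z) andbT /=.
  by case: eqP.
rewrite in_setD1 pair_up // andbT; move: yY; rewrite !inE => /andP[/andP[yz yP] _].
by apply/negP => /eqP/setP/(_ y); rewrite !inE eqxx yz yP orbT.
Qed.

End UpSet.

(** * The missing and the outer sets of a pile *)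

(* The result types are explicit so that cardinalities of these families
   elaborate like those in the general lemmas above; [lia] relies on it. *)
Definition inside n (F : {set {set 'I_n}}) (P : {set 'I_n}) : {set {set 'I_n}} :=
  [set A in F | A \subset P].
Definition missing n (F : {set {set 'I_n}}) (P : {set 'I_n}) : {set {set 'I_n}} :=
  [set S in powerset P | S \notin F].
Definition outer n (F : {set {set 'I_n}}) (P : {set 'I_n}) (y : 'I_n) :
  {set {set 'I_n}} :=
  [set A in F | (y \in A) && ~~ (A \subset P)].
Definition outer_weight n (F : {set {set 'I_n}}) (P : {set 'I_n}) (y : 'I_n) : rat :=
  (\sum_(A in outer F P y) (#|A|%:R)^-1)%R.

Section MissingSets.

Variables (n : nat) (F : {set {set 'I_n}}) (P : {set 'I_n}).

Lemma missing_sub S : S \in missing F P -> S \subset P.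
Proof. by rewrite !inE => /andP[]. Qed.

Lemma missing_up (hF : hereditary F) (S S' : {set 'I_n}) :
  S \in missing F P -> S \subset S' -> S' \subset P -> S' \in missing F P.
Proof.
rewrite !inE => /andP[_ SF] SS' S'P; rewrite S'P /=.
by apply: contra SF => /hF; apply.
Qed.

Lemma card_inside_add_missing : #|inside F P| + #|missing F P| = 2 ^ #|P|.
Proof.
rewrite -card_powerset -(card_sepID (powerset P) (fun S => S \in F)).
by congr (_ + _); apply: eq_card => S; rewrite !inE andbC.
Qed.

Lemma card_with_inside_add_missing_le y : y \in P ->
  #|sets_with (inside F P) y| + #|sets_with (missing F P) y| <= 2 ^ #|P|.-1.
Proof.
move=> yP; have <- : #|sets_with (powerset P) y| =
    #|sets_with (inside F P) y| + #|sets_with (missing F P) y|.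
  rewrite -(card_sepID (sets_with (powerset P) y) (fun S => S \in F)).
  by congr (_ + _); apply: eq_card => S; rewrite !inE;
    case: (S \in F); case: (S \subset P); case: (y \in S).
rewrite (cardsD1 y P) yP -card_powerset.
apply: (@leq_card_in_set _ _ (fun S => S :\ y)).
  move=> S1 S2; rewrite !inE => /andP[_ yS1] /andP[_ yS2] eqS.
  by rewrite -(setD1K yS1) eqS setD1K.
by move=> S; rewrite !inE => /andP[SP _]; apply: setSD.
Qed.

Lemma degF_split y :
  degF F y = #|sets_with (inside F P) y| + #|outer F P y|.
Proof.
rewrite /degF -(card_sepID [set A in F | y \in A] (fun A => A \subset P)).
by congr (_ + _); apply: eq_card => A; rewrite !inE;
  case: (A \in F); case: (A \subset P); case: (y \in A).
Qed.

Lemma missing_degree y c : y \in P -> c <= 2 ^ #|P|.-1 ->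
  2 ^ #|P|.-1 - c + 1 <= degF F y ->
  #|missing F P| + 1 <= c + avoid_num (missing F P) y + #|outer F P y|.
Proof.
move=> yP c_le; rewrite degF_split -(card_with_add_avoid_num (missing F P) y).
by have := card_with_inside_add_missing_le yP; lia.
Qed.

Lemma outer_eq0 z : nbhd F z = P -> outer F P z = set0.
Proof.
move=> Nz; apply/setP => A; rewrite !inE -Nz.
by apply/negP => /and3P[AF zA /negP[]]; apply: (bigcup_sup A); rewrite AF zA.
Qed.

End MissingSets.

Section Weights.

Variables (n : nat) (F : {set {set 'I_n}}) (P : {set 'I_n}).

Lemma outer_weight_ge0 y : (0 <= outer_weight F P y)%R.
Proof. by apply: sumr_ge0 => A _; rewrite invr_ge0 ler0n. Qed.

Lemma sum_weight_split :
  (\sum_(x in P) weight F x =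
   #|inside F P :\ set0|%:R + \sum_(x in P) outer_weight F P x)%R.
Proof.
have weight_split x : (weight F x =
    \sum_(A in inside F P | x \in A) (#|A|%:R)^-1 + outer_weight F P x)%R.
  rewrite /weight (bigID (fun A : {set 'I_n} => A \subset P)) /=.
  by congr (_ + _)%R; apply: eq_bigl => A; rewrite !inE;
    case: (A \in F); case: (x \in A); case: (A \subset P).
rewrite (eq_bigr _ (fun x _ => weight_split x)) big_split /=; congr (_ + _)%R.
rewrite (exchange_big_dep (mem (inside F P))) /=; last by move=> x A _ /andP[].
rewrite (bigID (fun A => A == set0)) /= big1 ?add0r; last first.
  by move=> A /andP[_ /eqP ->]; apply: big1 => x; rewrite in_set0 !andbF.
rewrite -sum1_card natr_sum; apply: eq_big => [A | A]; first by rewrite !inE andbC.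
move=> /andP[]; rewrite inE => /andP[AF AP] A0.
rewrite (eq_bigl (mem A)) => [|x]; last first.
  by rewrite AF AP; exact: andb_idl (subsetP AP x).
by rewrite sumr_const -[LHS]mulr_natr mulVf // pnatr_eq0 cards_eq0.
Qed.

Lemma outer_weight_ge_card_div y K (D : {set {set 'I_n}}) :
  D \subset outer F P y -> 0 < K -> {in D, forall A : {set 'I_n}, #|A| <= K} ->
  (#|D|%:R / K%:R <= outer_weight F P y)%R.
Proof.
move=> DO K_gt0 D_small.
pose inv_card (A : {set 'I_n}) : rat := (#|A|%:R)^-1%R.
apply: le_trans (ler_sum_subset (f := inv_card) DO _) => [|A _]; last first.
  by rewrite invr_ge0 ler0n.
apply: ler_card_mul_sum => A AD; have := subsetP DO A AD; rewrite inE => /and3P[_ yA _].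
have A_gt0 : 0 < #|A| by apply/card_gt0P; exists y.
by rewrite lef_pV2 ?posrE ?ltr0n // ler_nat D_small.
Qed.

Lemma outer_large_family (hF : hereditary F) y A K :
  y \in P -> A \in outer F P y -> 2 <= K -> K < #|A| ->
  exists D : {set {set 'I_n}}, [/\ D \subset outer F P y,
    {in D, forall B : {set 'I_n}, #|B| <= K} & #|D| = 2 ^ (K - 2)].
Proof.
(* The sets C :|: [set y; w] with C ⊆ B, where w ∈ A lies outside P and
   B ⊆ A has K - 2 elements other than y and w. *)
move=> yP; rewrite inE => /and3P[AF yA /subsetPn[w wA wP]] K_ge2 K_lt.
have wy : w != y by apply: contraNneq wP => ->.
set Y := [set y; w].
have YA : Y \subset A by rewrite subUset !sub1set yA wA.
have /exists_subset_card[B BA cardB] : K - 2 <= #|A :\: Y|.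
  by rewrite cardsD (setIidPr YA) cards2 eq_sym wy; lia.
have CY_sub (C : {set 'I_n}) : C \subset B -> C :|: Y \subset A.
  by move=> CB; rewrite subUset YA andbT (subset_trans CB) // (subset_trans BA) ?subsetDl.
have CYK (C : {set 'I_n}) : C \subset B -> (C :|: Y) :\: Y = C.
  move=> CB; rewrite setDUl setDv setU0; apply/setDidPl.
  by have := subset_trans CB BA; rewrite subsetD => /andP[].
exists [set C :|: Y | C in powerset B]; split.
- apply/subsetP => _ /imsetP[C + ->]; rewrite powersetE => CB.
  rewrite !inE (hF _ _ AF (CY_sub C CB)) !eqxx orbT /=.
  by apply/subsetPn; exists w; rewrite // !inE eqxx !orbT.
- move=> _ /imsetP[C + ->]; rewrite powersetE => CB.
  apply: leq_trans (leq_card_setU _ _) _; rewrite cards2 eq_sym wy.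
  by have := subset_leq_card CB; rewrite cardB; lia.
- rewrite card_in_imset ?card_powerset ?cardB // => C1 C2.
  by rewrite !powersetE => C1B C2B eqCY; rewrite -(CYK _ C1B) eqCY CYK.
Qed.

Lemma outer_weight_ge_ratio (hF : hereditary F) y K m : y \in P -> 2 <= K ->
  m <= #|outer F P y| -> m <= 2 ^ (K - 2) -> (m%:R / K%:R <= outer_weight F P y)%R.
Proof.
move=> yP K_ge2 m_le m_le_pow.
have K_gt0 : 0 < K by apply: leq_trans K_ge2.
suff [D [DO D_small m_le_D]] : exists D : {set {set 'I_n}}, [/\ D \subset outer F P y,
    {in D, forall A : {set 'I_n}, #|A| <= K} & m <= #|D|].
  apply: le_trans (outer_weight_ge_card_div DO K_gt0 D_small).
  by rewrite ler_pM2r ?invr_gt0 ?ltr0n // ler_nat.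
have [all_small | /forall_inPn[A AO]] := boolP [forall A in outer F P y, #|A| <= K].
  by exists (outer F P y); split=> // A; apply/(forall_inP all_small).
rewrite -ltnNge => K_lt.
have [D [DO D_small cardD]] := outer_large_family hF yP AO K_ge2 K_lt.
by exists D; rewrite cardD.
Qed.

End Weights.

(** * The deficit estimate *)

Section DeficitEstimate.

Variables (n d c : nat) (F : {set {set 'I_n}}) (P : {set 'I_n}) (z : 'I_n).
Hypotheses (hF : hereditary F) (zP : z \in P) (cardP : #|P| = d).
Hypotheses (d_ge50 : 50 <= d) (c_le_d : c <= d).
Hypothesis deg_ge : forall y, y \in P ->
  #|missing F P| + 1 <= c + avoid_num (missing F P) y + #|outer F P y|.
Hypothesis outer_z : outer F P z = set0.

Local Notation U := (missing F P).
Local Notation R := (\sum_(y in P :\ z) outer_weight F P y)%R.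
Local Notation deficit := (#|U| + 1 - c).

Let U_sub := @missing_sub n F P.
Let U_up := @missing_up n F P hF.

Lemma deficit_le_avoid_num_z : deficit <= avoid_num U z.
Proof. by have := deg_ge zP; rewrite outer_z cards0; lia. Qed.

Lemma card_with_z_lt : #|sets_with U z| < c.
Proof.
by have := deg_ge zP; rewrite outer_z cards0 -(card_with_add_avoid_num U z); lia.
Qed.

Lemma deficit_lt : deficit < c.
Proof.
have := avoid_num_le_card_with_up U_sub U_up zP.
by have := card_with_z_lt; have := deficit_le_avoid_num_z; lia.
Qed.

Lemma card_unavoided_ge : 0 < deficit ->
  d + #|codim2 P U z| + 1 <= c + #|rarely_avoided P U z 0|.
Proof.
move=> deficit_gt0; have deficit_le := deficit_le_avoid_num_z.
have PU : P \in U.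
  have /card_gt0P[S] : 0 < avoid_num U z by lia.
  rewrite inE => /andP[SU _]; have S_sub := U_sub SU.
  by have := U_up SU S_sub (subxx P).
have := card_often_avoided_add_codim2_lt U_sub U_up PU zP.
have := card_rarely_add_often_avoided U 0 zP; have := card_with_add_avoid_num U z.
by rewrite cardP; lia.
Qed.

Lemma outer_ge_rarely_avoided y k :
  y \in rarely_avoided P U z k -> deficit - k <= #|outer F P y|.
Proof. by rewrite !inE => /andP[/andP[_ yP] a_le]; have := deg_ge yP; lia. Qed.

Lemma sum_outer_weight_ge (Q : {set 'I_n}) m K :
  Q \subset P :\ z -> 2 <= K -> m <= 2 ^ (K - 2) ->
  {in Q, forall y, m <= #|outer F P y|} -> (#|Q|%:R * m%:R / K%:R <= R)%R.
Proof.
move=> QPz K_ge2 m_le Q_outer; rewrite -mulrA.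
apply: le_trans (ler_sum_subset QPz (fun y _ => outer_weight_ge0 F P y)).
apply: ler_card_mul_sum => y yQ; apply: outer_weight_ge_ratio => //; last exact: Q_outer.
by have := subsetP QPz y yQ; rewrite inE => /andP[].
Qed.

Lemma rarely_avoided_sub U' k : rarely_avoided P U' z k \subset P :\ z.
Proof. by apply/subsetP => y; rewrite !inE => /andP[]. Qed.

Lemma deficit1_bound : deficit = 1 -> ((if (c < d)%N then 1 else 2^-1) <= R)%R.
Proof.
move=> deficit1; have := card_unavoided_ge; rewrite deficit1 => /(_ isT) L0_ge.
have L0_outer : {in rarely_avoided P U z 0, forall y, 1 <= #|outer F P y|}.
  by move=> y /outer_ge_rarely_avoided; rewrite deficit1.
have := sum_outer_weight_ge (rarely_avoided_sub U 0) (leqnn 2) (leqnn 1) L0_outer.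
case: ltnP => [c_lt | c_ge] bound.
  have : (2%:R <= #|rarely_avoided P U z 0|%:R :> rat)%R by rewrite ler_nat; lia.
  lra.
have : (1%:R <= #|rarely_avoided P U z 0|%:R :> rat)%R by rewrite ler_nat; lia.
lra.
Qed.

Lemma deficit2_bound : deficit = 2 -> (2%:R <= R)%R.
Proof.
move=> deficit2; have := card_unavoided_ge; rewrite deficit2 => /(_ isT) L0_ge.
have Q1_outer : {in rarely_avoided P U z 1, forall y, 1 <= #|outer F P y|}.
  by move=> y /outer_ge_rarely_avoided; rewrite deficit2.
have := sum_outer_weight_ge (rarely_avoided_sub U 1) (leqnn 2) (leqnn 1) Q1_outer.
apply: le_trans.
apply: ler_nat_ratio => //.
have := card_rarely_avoided_mono P U z (leq0n 1).
have := card_rarely_add_often_avoided U 1 zP.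
have := card_often_avoided1_le U_sub U_up zP.
have := card_often_avoided_with_le U_sub U_up zP.
have := card_often_avoided_without_lt U_sub U_up zP.
have := avoid_num_le_card_with_up U_sub U_up zP.
have := card_with_add_avoid_num U z.
by rewrite cardP; lia.
Qed.

Lemma card_once_avoided_ge K : 0 < deficit -> 4 * K <= d + 3 ->
  #|rarely_avoided P U z 0| < K -> 2 * K <= #|rarely_avoided P (sets_with U z) z 1|.
Proof.
move=> /card_unavoided_ge L0_ge K_le L0_lt.
have := card_rarely_add_often_avoided (sets_with U z) 1 zP.
have := card_often_avoided_with_le U_sub U_up zP.
by rewrite cardP; lia.
Qed.

Lemma outer_ge_once_avoided y :
  y \in rarely_avoided P (sets_with U z) z 1 -> deficit - 2 <= #|outer F P y|.
Proof.
by move=> /(subsetP (rarely_avoided_with_sub U_sub U_up 1 zP)) /outer_ge_rarely_avoided.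
Qed.

Lemma large_deficit_bound : 3 <= deficit -> (deficit%:R <= R)%R.
Proof.
(* Either at least K unavoided points each carry deficit/K, or at least 2K
   points are avoided at most once by the members containing z, and each of
   those carries (deficit - 2)/K, or 1/2 when deficit = 3. *)
move=> deficit_ge3; have [K [K_ge3 d_le K_le]] := exists_log_scale d_ge50.
have K_ge2 := ltnW K_ge3.
have deficit_le : deficit <= 2 ^ (K - 2) by have := deficit_lt; lia.
have [K_le_L0 | L0_lt_K] := leqP K #|rarely_avoided P U z 0|.
  have L0_outer : {in rarely_avoided P U z 0, forall y, deficit <= #|outer F P y|}.
    by move=> y /outer_ge_rarely_avoided; rewrite subn0.
  have := sum_outer_weight_ge (rarely_avoided_sub U 0) K_ge2 deficit_le L0_outer.
  apply: le_trans.
  by apply: ler_nat_ratio; [lia | rewrite leq_mul2r K_le_L0 orbT].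
have Q2_ge := card_once_avoided_ge (ltnW (ltnW deficit_ge3)) K_le L0_lt_K.
have [deficit_lt4 | deficit_ge4] := ltnP deficit 4.
  have Q2_outer : {in rarely_avoided P (sets_with U z) z 1,
      forall y, 1 <= #|outer F P y|} by move=> y /outer_ge_once_avoided; lia.
  have := sum_outer_weight_ge (rarely_avoided_sub _ 1) (leqnn 2) (leqnn 1) Q2_outer.
  apply: le_trans.
  by apply: ler_nat_ratio => //; lia.
have Q2_outer : {in rarely_avoided P (sets_with U z) z 1,
    forall y, deficit - 2 <= #|outer F P y|} by move=> y /outer_ge_once_avoided.
have deficit2_le : deficit - 2 <= 2 ^ (K - 2) by lia.
apply: le_trans (sum_outer_weight_ge (rarely_avoided_sub _ 1) K_ge2 deficit2_le Q2_outer).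
by apply: ler_nat_ratio; [lia | nia].
Qed.

Lemma deficit_bound :
  ((if (c < d)%N then deficit%:R else deficit%:R - 2^-1) <=
   \sum_(x in P) outer_weight F P x)%R.
Proof.
apply: le_trans (ler_sum_subset (subD1set P z) (fun y _ => outer_weight_ge0 F P y)).
have R_ge0 : (0 <= R)%R by apply: sumr_ge0 => y _; apply: outer_weight_ge0.
have [deficit_le2 | /large_deficit_bound] := leqP deficit 2; last first.
  by case: ifP => _; lra.
have : deficit \in [:: 0; 1; 2] by rewrite !inE; lia.
rewrite !inE => /or3P[/eqP-> | /eqP deficit1 | /eqP deficit2].
- by case: ifP => _; lra.
- by have := deficit1_bound deficit1; rewrite deficit1; case: ifP => _; lra.
- by have := deficit2_bound deficit2; rewrite deficit2; case: ifP => _; lra.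
Qed.

End DeficitEstimate.

Lemma sum_weight_eq n (F : {set {set 'I_n}}) (P : {set 'I_n}) : set0 \in F ->
  (\sum_(x in P) weight F x =
   (2 ^ #|P|)%:R - 1 - #|missing F P|%:R + \sum_(x in P) outer_weight F P x)%R.
Proof.
move=> set0F; rewrite sum_weight_split; congr (_ + _)%R.
have := card_inside_add_missing F P.
rewrite (cardsD1 set0 (inside F P)) !inE set0F sub0set add1n -addn1 => <-.
by rewrite !natrD; lra.
Qed.

Lemma frakB_mul d c : 0 < d ->
  (frakB d c * d%:R = if (c < d)%N then (2 ^ d)%:R - c%:R
                      else (2 ^ d)%:R - d%:R - 2^-1)%R.
Proof.
by move=> d_gt0; rewrite /frakB; case: ifP => _; rewrite mulfVK // pnatr_eq0 -lt0n.
Qed.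

Theorem mainTheorem14 (n d c : nat) (F : {set {set 'I_n}}) (P : {set 'I_n}) :
  (50 <= d)%N -> (1 <= c <= d)%N ->
  hereditary F ->
  (forall x : 'I_n, (2 ^ d.-1 - c + 1 <= degF F x)%N) ->
  isolated_pile F d P ->
  (frakB d c * d%:R <= \sum_(x in P) weight F x)%R.
Proof.
move=> d_ge50 /andP[_ c_le_d] hF deg_ge [[cardP [_ [z zP Nz]]] _].
have c_le_pow : c <= 2 ^ #|P|.-1.
  rewrite cardP; have := ltn_expl d.-1 (isT : 1 < 2).
  by move: (2 ^ d.-1) => m; lia.
have deg_P y : y \in P ->
    #|missing F P| + 1 <= c + avoid_num (missing F P) y + #|outer F P y|.
  by move=> yP; apply: missing_degree yP c_le_pow _; rewrite cardP.
have set0F : set0 \in F.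
  have /card_gt0P[A] : 0 < degF F z by have := deg_ge z; lia.
  by rewrite inE => /andP[AF _]; apply: hF AF (sub0set A).
rewrite sum_weight_eq // frakB_mul; last lia.
have := deficit_bound hF zP cardP d_ge50 c_le_d deg_P (outer_eq0 Nz).
have := ler_natB rat (#|missing F P| + 1) c.
rewrite cardP natrD; have [_ | c_ge_d] := ltnP c d; first lra.
have c_eq : c = d by lia.
by rewrite c_eq; lra.
Qed.
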